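(* Let $(W,S)$ be a chordal Coxeter system with a set $\mathcal B$ of bad irreducible simplices. Then $S$ has a bad separator if and only if there is a bad maximal irreducible simplex $A=\{a,b,c\}$ of $(W,S)$ with $m(a,b)=2$ and an element $d\in S-(A\cup A^\perp)$ such that $\{a,b,d\}$ is a simplex of $(W,S)$.
   Context: Coxeter system $(W,S)$: $W=\langle S\mid (st)^{m(s,t)}\ (m(s,t)<\infty)\rangle$, $m(s,s)=1$, $m(s,t)=m(t,s)\in\{2,\dots,\infty\}$. $\Gamma(W,S)$: graph on $S$ with edge $\{s,t\}$ iff $s\ne t$, $m(s,t)<\infty$; chordal: every cycle of length $\ge4$ has a chord. A simplex is $A\subseteq S$ with all $m(s,t)<\infty$; $A$ is irreducible if the graph on $A$ with edges $m(s,t)\ge3$ is connected; maximal irreducible simplex: not properly contained in another irreducible simplex. $A^\perp=\{s\in S: m(s,x)=2\ \forall x\in A\}$. Types ${\bf G}_3,{\bf G}_4$: Coxeter diagram a path with labels $3,5$ resp. $3,3,5$. A set of bad edges is a set $\mathcal B_2$ of pairs $\{a,b\}\subseteq S$ with $5\le m(a,b)<\infty$ such that every irreducible simplex properly containing $\{a,b\}$ has type ${\bf G}_3$ or ${\bf G}_4$; an irreducible simplex is bad if it contains a pair in $\mathcal B_2$; the set $\mathcal B$ of all bad irreducible simplices is a set of bad irreducible simplices. For $c,f\in S$, $B\subseteq S$ is a $(c,f)$-separator if $c,f\notin B$ lie in different connected components of $\Gamma(W,S)-B$; minimal if no proper subset is one. A bad separator of $S$ is a subset $B\subseteq S$ for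 which there are $a,b\in B$ with $m(a,b)=2$ and $c\in S-B$ such that $A=\{a,b,c\}$ is a bad maximal irreducible simplex, $B\subseteq\{a,b\}\cup A^\perp$, and some $f\in S-B$ such that $B$ is a minimal $(c,f)$-separator of $S$. *)

(* A Coxeter system (W,S) is given by its Coxeter matrix
   m : S -> S -> nat on a finite type S of generators, with the convention
   m s t = 0 encoding m(s,t) = infinity. *)
From mathcomp Require Import all_boot.

Set Implicit Arguments. Unset Strict Implicit. Unset Printing Implicit Defensive.

Section Coxeter.
Variables (S : finType) (m : S -> S -> nat).

Definition coxeter_matrix : Prop :=
  (forall s, m s s = 1) /\ (forall s t, m s t = m t s) /\
  (forall s t, s != t -> m s t != 1).

Definition finm (s t : S) : bool := m s t != 0.

Definition gadj : rel S := fun s t => (s != t) && finm s t.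

Definition chordal : Prop :=
  forall p : seq S, uniq p -> 4 <= size p -> cycle gadj p ->
    exists x, exists y, [/\ x \in p, y \in p, gadj x y,
                          y != next p x & x != next p y].

Definition simplex (A : {set S}) : bool :=
  [forall s in A, forall t in A, finm s t].

Definition irreducible (A : {set S}) : bool :=
  (A != set0) &&
  [forall x in A, forall y in A,
     connect (fun u v => [&& u \in A, v \in A & 3 <= m u v]) x y].

Definition irr_simplex (A : {set S}) : bool := simplex A && irreducible A.

Definition max_irr_simplex (A : {set S}) : bool :=
  irr_simplex A && [forall B : {set S}, irr_simplex B ==> ~~ (A \proper B)].

Definition perp (A : {set S}) : {set S} :=
  [set s | [forall x in A, m s x == 2]].

Definition type_G3 (A : {set S}) : Prop :=
  exists x y z, [/\ A = [set x; y; z], m x y = 3, m y z = 5 & m x z = 2].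

Definition type_G4 (A : {set S}) : Prop :=
  exists w x y z, A = [set w; x; y; z] /\
    [/\ m w x = 3, m x y = 3 & m y z = 5] /\
    [/\ m w y = 2, m w z = 2 & m x z = 2].

Definition bad_edges (B2 : {set {set S}}) : Prop :=
  forall e, e \in B2 ->
    exists a b, [/\ e = [set a; b], a != b, 5 <= m a b, finm a b &
      forall A, irr_simplex A -> e \proper A -> type_G3 A \/ type_G4 A].

Definition bad_simplex (B2 : {set {set S}}) (A : {set S}) : bool :=
  irr_simplex A && [exists e in B2, e \subset A].

Definition separator (B : {set S}) (c f : S) : bool :=
  [&& c \notin B, f \notin B &
      ~~ connect (fun u v => [&& gadj u v, u \notin B & v \notin B]) c f].

Definition min_separator (B : {set S}) (c f : S) : bool :=
  separator B c f && [forall B' : {set S}, (B' \proper B) ==> ~~ separator B' c f].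

Definition bad_separator (B2 : {set {set S}}) (B : {set S}) : Prop :=
  exists a b c f, [/\ a \in B, b \in B, m a b = 2 & c \notin B] /\
    [/\ bad_simplex B2 [set a; b; c] && max_irr_simplex [set a; b; c],
     B \subset [set a; b] :|: perp [set a; b; c],
     f \notin B & min_separator B c f].

End Coxeter.

From mathcomp Require Import all_boot zify.
Set Implicit Arguments. Unset Strict Implicit. Unset Printing Implicit Defensive.

(* Both directions rest on a Helly-type property of the chordal graph Gamma:
   if every vertex of a clique K has a neighbour on a path avoiding K, then
   one vertex of the path is adjacent to all of K.  By induction on the path:
   if neither end vertex can be dropped, some k1 in K sees only the first and
   some k2 only the last vertex, and the cycle k1, path, k2 has a triangle on
   its edge k2 k1, whose apex would be a common neighbour on the path.
   If B is a minimal (c,f)-separator containing a and b, both a and b have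
   neighbours in the component of f, so they have a common neighbour d there;
   d is not adjacent to c, hence lies outside A and A^perp.
   Conversely, {a, b} together with A^perp separates c from such a d: a path
   from c to d avoiding it would carry a vertex adjacent to all of A, outside
   A and A^perp, contradicting the maximality of A.  A minimal separator
   inside it contains a and b, the common neighbours of c and d. *)

Lemma next_cat_cons2 (T : eqType) (p q : seq T) x y :
  uniq (p ++ x :: y :: q) -> next (p ++ x :: y :: q) x = y.
Proof.
move=> U; rewrite next_nth mem_cat inE eqxx orbT.
have xp : x \notin p by move: U; rewrite cat_uniq /= => /and3P[_ /norP[]].
case: p U xp => [|h p] U /=; first by rewrite eqxx.
rewrite inE negb_or => /andP[xh xp].
by rewrite eq_sym (negbTE xh) index_cat (negbTE xp) /= eqxx addn0 nth_cat ltnNge leqnSn subSnn.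
Qed.

Lemma next_last (T : eqType) (p : seq T) x :
  uniq (x :: p) -> next (x :: p) (last x p) = x.
Proof.
move=> U; rewrite next_nth mem_last.
have idx : index (last x p) (x :: p) = size p.
  by rewrite (last_nth x) index_uniq.
by rewrite idx nth_default.
Qed.

Lemma cycle_shortcut (T : eqType) (e : rel T) p1 p2 p3 x y :
  e x y -> cycle e (p1 ++ x :: p2 ++ y :: p3) -> cycle e (p1 ++ x :: y :: p3).
Proof.
move=> exy; rewrite !(cycle_catC _ p1) /= -catA !rcons_path cat_path /= exy.
by rewrite last_cat /= last_cat => /andP[/andP[_ /andP[_ ->]] ->].
Qed.

Lemma uniq_cycle_chord (T : eqType) (e : rel T) u s x y :
  symmetric e -> uniq (u :: s) -> cycle e (u :: s) ->
  x \in u :: s -> y \in u :: s -> x != y -> e x y ->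
  y != next (u :: s) x -> x != next (u :: s) y ->
  exists s', [/\ 1 < size s' < size s, last u s' = last u s,
                {subset s' <= s}, uniq (u :: s') & cycle e (u :: s')].
Proof.
move=> e_sym Us cyc; wlog [p1 [p2 [p3 E]]] : x y / exists p1 p2 p3,
    u :: s = p1 ++ x :: p2 ++ y :: p3.
  move=> shortcut xin yin xy exy nx ny.
  have [p1 [r E]] : exists p1 r, u :: s = p1 ++ x :: r.
    by case/splitPr: xin => p1 r; exists p1, r.
  have /orP y_p1_r : (y \in p1) || (y \in r).
    by move: yin; rewrite E mem_cat inE eq_sym (negbTE xy).
  case: y_p1_r E => [/splitPr[q1 q2] | /splitPr[p2 p3]] E.
    apply: (shortcut y x); rewrite // 1?eq_sym 1?e_sym //.
    by exists q1, q2, r; rewrite E -catA.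
  by apply: (shortcut x y) => //; exists p1, p2, p3.
(* The chord x y cuts off the arc p2 and leaves a shorter cycle through the edge (last u s, u). *)
move=> _ _ _ exy nx ny.
have p2_gt0 : 0 < size p2.
  case: p2 E => // E; move: nx; rewrite E next_cat_cons2 ?eqxx //.
  by rewrite -E.
have p13_gt0 : 0 < size p1 + size p3.
  case: p1 E => [|h p1] //= [ux Es]; case: p3 Es => [|h p3] // Es.
  by move: ny; rewrite -ux -[y](last_rcons u p2) -cats1 -Es next_last ?eqxx.
set c := p1 ++ x :: y :: p3.
have sub_c : subseq c (u :: s).
  by rewrite E cat_subseq //= eqxx suffix_subseq.
have [s' Ec] : exists s', c = u :: s'.
  by move: E; rewrite /c; case: (p1) => [|h p1'] [-> _]; eexists.
have Us' : uniq (u :: s') by rewrite -Ec (subseq_uniq sub_c).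
exists s'; split.
- by have := congr1 size E; have := congr1 size Ec; rewrite /c /= !size_cat /= size_cat /=; lia.
- by rewrite -(last_cons u u s) -(last_cons u u s') -Ec E /c !last_cat /= last_cat.
- move=> w ws'; have := @mem_subseq _ _ _ sub_c w; rewrite Ec inE ws' orbT => /(_ isT).
  by rewrite inE => /orP[/eqP wu|//]; move: Us'; rewrite /= -wu ws'.
- exact: Us'.
- by rewrite -Ec (cycle_shortcut (p2 := p2)) // -E.
Qed.

Section ChordalGraph.
Variables (S : finType) (m : S -> S -> nat).
Hypothesis m_sym : forall s t, m s t = m t s.
Hypothesis m_chordal : chordal m.

Lemma gadj_sym : symmetric (gadj m).
Proof. by move=> x y; rewrite /gadj /finm m_sym eq_sym. Qed.

Lemma chordal_cycle_triangle u s :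
  uniq (u :: s) -> 2 <= size s -> cycle (gadj m) (u :: s) ->
  exists2 w, w \in s & [/\ w != last u s, gadj m u w & gadj m (last u s) w].
Proof.
have [n] := ubnP (size s); elim: n u s => // n IH u s /ltnSE s_le Us s_ge2 cyc.
have [s_le2 | s_gt2] := leqP (size s) 2.
  case: s s_le s_ge2 s_le2 Us cyc => [|w [|v [|? ?]]] //= _ _ _.
  rewrite !inE negb_or => /andP[_ /andP[wv _]] /and3P[uw vw _].
  by exists w; rewrite ?inE ?eqxx // [gadj m v w]gadj_sym.
have [x [y [xin yin gxy nx ny]]] := m_chordal Us s_gt2 cyc.
have xy : x != y by apply: contraTneq gxy => ->; rewrite /gadj eqxx.
have [s' [/andP[s'_ge2 lt_s'] last_s' sub_s' Us' cyc']] :=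
  uniq_cycle_chord gadj_sym Us cyc xin yin xy gxy nx ny.
have [w ws' [wl uw lw]] := IH u s' (leq_trans lt_s' s_le) Us' s'_ge2 cyc'.
by exists w; rewrite -?last_s' ?sub_s'.
Qed.

Lemma chordal_path_end_neighbours k1 k2 x p z :
  uniq (x :: rcons p z) -> path (gadj m) x (rcons p z) ->
  k1 \notin x :: rcons p z -> k2 \notin x :: rcons p z ->
  gadj m k1 k2 -> gadj m k1 x -> gadj m k2 z ->
  has (gadj m k1) (rcons p z) || has (gadj m k2) (x :: p).
Proof.
move=> Up path_p k1_off k2_off k12 k1x k2z; apply/norP=> -[k1_pz k2_xp].
(* A triangle on the edge (k2, k1) of the cycle k1, x, ..., z, k2 has its apex on the path. *)
have [|||w] := @chordal_cycle_triangle k1 (rcons (x :: rcons p z) k2).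
- rewrite cons_uniq rcons_uniq mem_rcons inE negb_or k1_off k2_off Up !andbT.
  by apply: contraTneq k12 => ->; rewrite /gadj eqxx.
- by rewrite size_rcons.
- rewrite /= rcons_path last_rcons /= rcons_path path_p last_rcons k1x.
  by rewrite gadj_sym k2z gadj_sym k12.
rewrite last_rcons mem_rcons inE => /orP[/eqP-> | wxz] [wk2 k1w k2w].
  by rewrite eqxx in wk2.
have wx : w = x.
  move: wxz; rewrite inE => /orP[/eqP // | wpz].
  by move: k1_pz => /hasPn/(_ w wpz); rewrite k1w.
have wz : w = z.
  move: wxz; rewrite -rcons_cons mem_rcons inE => /orP[/eqP // | wxp].
  by move: k2_xp => /hasPn/(_ w wxp); rewrite k2w.
by move: Up; rewrite /= mem_rcons inE -wx -wz eqxx.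
Qed.

Lemma chordal_path_clique_neighbour (K : seq S) x p :
  uniq (x :: p) -> path (gadj m) x p ->
  {in K, forall k, k \notin x :: p} ->
  {in K &, forall k1 k2, k1 != k2 -> gadj m k1 k2} ->
  {in K, forall k, has (gadj m k) (x :: p)} ->
  exists2 w, w \in x :: p & {in K, forall k, gadj m k w}.
Proof.
move=> + + + K_clique; have [n] := ubnP (size p); elim: n x p => // n IH x p.
move=> /ltnSE p_le Up path_p K_off K_nb.
case: p p_le Up path_p K_off K_nb => [|y q] p_le Up path_p K_off K_nb.
  by exists x; rewrite ?mem_head // => k /K_nb /=; rewrite orbF.
have [/allP nb_yq | /allPn[k1 k1K k1_yq]] :=
  boolP (all (fun k => has (gadj m k) (y :: q)) K).
  have K_off' : {in K, forall k, k \notin y :: q}.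
    by move=> k /K_off; rewrite inE negb_or => /andP[].
  case/andP: Up => _ Uyq; case/andP: path_p => _ path_yq.
  have [w wyq w_nb] := IH y q p_le Uyq path_yq K_off' nb_yq.
  by exists w; rewrite // inE wyq orbT.
have k1x : gadj m k1 x.
  by have := K_nb k1 k1K; rewrite -cat1s has_cat (negbTE k1_yq) /= !orbF.
have [p' [z Ep]] : exists p' z, y :: q = rcons p' z.
  by exists (belast y q), (last y q); rewrite lastI.
rewrite Ep in p_le Up path_p K_off K_nb k1_yq *.
have [/allP nb_xp' | /allPn[k2 k2K k2_xp']] :=
  boolP (all (fun k => has (gadj m k) (x :: p')) K).
  have K_off' : {in K, forall k, k \notin x :: p'}.
    by move=> k /K_off; rewrite -rcons_cons mem_rcons inE negb_or => /andP[].
  move: Up path_p; rewrite -rcons_cons rcons_uniq rcons_path => /andP[_ Uxp'] /andP[path_xp' _].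
  have p'_lt : size p' < n by rewrite -(size_rcons p' z).
  have [w wxp' w_nb] := IH x p' p'_lt Uxp' path_xp' K_off' nb_xp'.
  by exists w; rewrite // mem_rcons inE wxp' orbT.
have k2z : gadj m k2 z.
  by have := K_nb k2 k2K; rewrite -rcons_cons has_rcons (negbTE k2_xp') orbF.
have k12 : k1 != k2 by apply: contraNneq k2_xp' => <-; rewrite /= k1x.
have := chordal_path_end_neighbours Up path_p (K_off k1 k1K) (K_off k2 k2K)
  (K_clique k1 k2 k1K k2K k12) k1x k2z.
by rewrite (negbTE k1_yq) (negbTE k2_xp').
Qed.
End ChordalGraph.

Section CoxeterSeparators.
Variables (S : finType) (m : S -> S -> nat).
Hypothesis m_coxeter : coxeter_matrix m.
Hypothesis m_chordal : chordal m.
Implicit Types (A B X : {set S}) (a b c d f s u v x y z : S).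

Let m_refl : forall s, m s s = 1. Proof. by case: m_coxeter. Qed.
Let m_sym : forall s t, m s t = m t s. Proof. by case: m_coxeter => _ []. Qed.
Let m_neq1 : forall s t, s != t -> m s t != 1. Proof. by case: m_coxeter => _ []. Qed.

Lemma m_eq2_neq a b : m a b = 2 -> a != b.
Proof. by apply: contra_eqN => /eqP->; rewrite m_refl. Qed.

Definition gadjD B : rel S :=
  fun u v => [&& gadj m u v, u \notin B & v \notin B].

Lemma gadjD_sym B : symmetric (gadjD B).
Proof. by move=> u v; rewrite /gadjD (gadj_sym m_sym) [(u \notin B) && _]andbC. Qed.

Lemma connect_gadjD_notin B u v : connect (gadjD B) u v -> u \notin B -> v \notin B.
Proof.
case/connectP=> p + ->; elim: p u => //= w p IH u /andP[/and3P[_ _ wB] path_p] _.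
exact: IH.
Qed.

Lemma finm_refl s : finm m s s. Proof. by rewrite /finm m_refl. Qed.

Lemma finm_sym s t : finm m s t = finm m t s. Proof. by rewrite /finm m_sym. Qed.

Lemma simplex_finm X x y : simplex m X -> x \in X -> y \in X -> finm m x y.
Proof. by move=> /forall_inP sX xX yX; apply: (forall_inP (sX x xX)). Qed.

Lemma simplex_gadj X x y : simplex m X -> x \in X -> y \in X -> x != y -> gadj m x y.
Proof. by move=> sX xX yX xy; rewrite /gadj xy (simplex_finm sX). Qed.

Lemma simplex3 a b d :
  finm m a b -> finm m a d -> finm m b d -> simplex m [set a; b; d].
Proof.
move=> ab ad bd; apply/forall_inP=> x; rewrite !inE => /orP[/orP[]|] /eqP->;
apply/forall_inP=> y; rewrite !inE => /orP[/orP[]|] /eqP->;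
by rewrite ?finm_refl // finm_sym.
Qed.

Lemma irreducible_set2 a b : m a b = 2 -> irreducible m [set a; b] = false.
Proof.
move=> mab; have ab := m_eq2_neq mab.
apply/negbTE/negP=> /andP[_ /forall_inP/(_ a (set21 a b))/forall_inP/(_ b (set22 a b))].
case/connectP=> [[/= _ ba | v p /= /andP[/and3P[_ /set2P[]-> m3] _] _]].
  by rewrite ba eqxx in ab.
all: by rewrite ?m_refl ?mab in m3.
Qed.

Lemma irr_simplex_setU1 A s z :
  irr_simplex m A -> {in A, forall x, finm m s x} -> z \in A -> 3 <= m s z ->
  irr_simplex m (s |: A).
Proof.
case/andP=> sA /andP[_ /forall_inP irrA] fs zA msz; apply/and3P; split.
- apply/forall_inP=> x /setU1P[->|xA]; apply/forall_inP=> y /setU1P[->|yA].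
  + exact: finm_refl.
  + exact: fs.
  + by rewrite finm_sym fs.
  + exact: simplex_finm sA xA yA.
- by apply/set0Pn; exists s; apply: setU11.
set r := fun u v => [&& u \in s |: A, v \in s |: A & 3 <= m u v].
have conn_A x y : x \in A -> y \in A -> connect r x y.
  move=> xA yA; apply: connect_sub (forall_inP (irrA x xA) y yA) => u v /and3P[uA vA muv].
  by apply: connect1; rewrite /r !setU1r.
have conn_z x : x \in s |: A -> connect r x z /\ connect r z x.
  case/setU1P=> [->|xA]; last by split; apply: conn_A.
  by split; apply: connect1; rewrite /r setU11 setU1r // m_sym.
apply/forall_inP=> x /conn_z[xz _]; apply/forall_inP=> y /conn_z[_ zy].
exact: connect_trans xz zy.
Qed.

Lemma max_irr_simplex_perp A s :
  max_irr_simplex m A -> s \notin A -> {in A, forall x, finm m s x} -> s \in perp m A.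
Proof.
case/andP=> irrA /forallP maxA sA fs; rewrite inE; apply/forall_inP=> z zA.
have sz : s != z by apply: contraNneq sA => ->.
have [msz | ] := leqP 3 (m s z).
  have := maxA (s |: A); rewrite (irr_simplex_setU1 irrA fs zA msz) /=.
  by rewrite properUr // sub1set.
by move: (fs z zA) (m_neq1 sz); rewrite /finm; case: (m s z) => [|[|[|]]].
Qed.

Lemma connect_gadjD_setD1 B a c f :
  f \notin B -> connect (gadjD (B :\ a)) c f ->
  (c \notin B) && connect (gadjD B) c f \/
  exists2 x, x \notin B & gadj m a x && connect (gadjD B) x f.
Proof.
move=> fB /connectP[p]; elim: p c => [|y p IH] c /=.
  by move=> _ <-; left; rewrite fB connect0.
move=> /andP[/and3P[cy cBa _] path_p] f_last.
case: (IH y path_p f_last) => [/andP[yB y_f] | ]; last by right.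
have [cB | cB] := boolP (c \in B).
  have ca : c = a by apply/eqP; move: cBa; rewrite in_setD1 negb_and cB orbF negbK.
  by right; exists y; rewrite // -ca cy.
by left => /=; apply: connect_trans y_f; apply: connect1; rewrite /gadjD cy cB yB.
Qed.

Lemma min_separator_neighbour B a c f :
  min_separator m B c f -> a \in B ->
  exists2 x, x \notin B & gadj m a x && connect (gadjD B) x f.
Proof.
case/andP=> /and3P[cB fB c_f] /forallP/(_ (B :\ a)) + aB.
rewrite properD1 // /separator !in_setD1 !negb_and cB fB !orbT /= negbK => c_f'.
case: (connect_gadjD_setD1 fB c_f') => // /andP[_ c_f''].
by rewrite c_f'' in c_f.
Qed.

Lemma separator_common_neighbour B c f z :
  separator m B c f -> gadj m c z -> gadj m z f -> z \in B.
Proof.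
case/and3P=> cB fB /negP c_f cz zf; apply/negPn/negP=> zB; apply: c_f.
by apply: (@connect_trans _ _ z); apply: connect1; rewrite /gadjD ?cz ?zf ?cB ?fB zB.
Qed.

Lemma exists_min_separator B c f :
  separator m B c f -> exists2 B' : {set S}, B' \subset B & min_separator m B' c f.
Proof.
move=> sepB; have [B' /minsetP[sepB' minB'] subB'] :=
  minset_exists (P := fun B => separator m B c f) sepB.
exists B' => //; rewrite /min_separator sepB'; apply/forall_inP=> B'' ltB''.
apply/negP=> /minB'/(_ (proper_sub ltB'')) eqB''.
by rewrite eqB'' properxx in ltB''.
Qed.

Lemma gadjD_clique_neighbour B (K : seq S) x y :
  x \notin B -> connect (gadjD B) x y -> {subset K <= B} ->
  {in K &, forall k1 k2, k1 != k2 -> gadj m k1 k2} ->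
  {in K, forall k, gadj m k x || gadj m k y} ->
  exists w, [/\ w \notin B, connect (gadjD B) x w & {in K, forall k, gadj m k w}].
Proof.
move=> xB /connectP[p0 path_p0 ->] KB K_clique.
case: (shortenP path_p0) => p path_p Up _ K_nb {p0 path_p0}.
have on_path w : w \in x :: p -> (w \notin B) && connect (gadjD B) x w.
  by move=> /(path_connect path_p) x_w; rewrite (connect_gadjD_notin x_w xB).
have K_off : {in K, forall k, k \notin x :: p}.
  by move=> k /KB kB; apply/negP=> /on_path; rewrite kB.
have K_nb' : {in K, forall k, has (gadj m k) (x :: p)}.
  move=> k /K_nb /orP[kx | kl]; apply/hasP; first by exists x; rewrite ?mem_head.
  by exists (last x p); rewrite ?mem_last.
have path_p' : path (gadj m) x p by apply: sub_path path_p => u v /andP[].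
have [w /on_path /andP[wB x_w] w_nb] :=
  chordal_path_clique_neighbour m_sym m_chordal Up path_p' K_off K_clique K_nb'.
by exists w.
Qed.

Lemma connect_gadjD_first_step B c d :
  c != d -> connect (gadjD B) c d ->
  exists x, [/\ gadj m c x, x \notin c |: B & connect (gadjD (c |: B)) x d].
Proof.
move=> cd /connectP[p0 path_p0 d_last]; rewrite {d}d_last in cd *.
case: (shortenP path_p0) cd => [[|x p]] /=; first by rewrite eqxx.
move=> /andP[/and3P[cx cB xB] path_p] /andP[cxp Up] _ _.
have sub : {in x :: p &, subrel (gadjD B) (gadjD (c |: B))}.
  move=> u v up vp /and3P[uv uB vB].
  by rewrite /gadjD uv !in_setU1 !negb_or uB vB (memPn cxp u up) (memPn cxp v vp).
exists x; split=> //; first by rewrite in_setU1 negb_or xB (memPn cxp x (mem_head x p)).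
apply/connectP; exists p => //.
exact: (sub_in_path (P := [in x :: p]) sub (allss _) path_p).
Qed.

Lemma min_separator_common_neighbour B a b c f :
  min_separator m B c f -> a \in B -> b \in B -> gadj m a b ->
  exists d, [/\ d \notin B, gadj m a d, gadj m b d & ~~ connect (gadjD B) c d].
Proof.
move=> msep aB bB ab; have /andP[/and3P[_ _ c_f] _] := msep.
have [x xB /andP[ax x_f]] := min_separator_neighbour msep aB.
have [y yB /andP[b_y y_f]] := min_separator_neighbour msep bB.
have symB := sym_connect_sym (gadjD_sym B).
have x_y : connect (gadjD B) x y by apply: connect_trans x_f _; rewrite symB.
have [||| d [dB x_d d_nb]] := gadjD_clique_neighbour (K := [:: a; b]) xB x_y.
- by move=> k; rewrite !inE => /orP[] /eqP->.
- move=> k1 k2; rewrite !inE => /orP[] /eqP-> /orP[] /eqP->; rewrite ?eqxx // => _.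
  by rewrite gadj_sym.
- by move=> k; rewrite !inE => /orP[] /eqP->; rewrite ?ax ?b_y ?orbT.
exists d; split; rewrite ?d_nb ?mem_head ?inE ?eqxx ?orbT //.
apply: contra c_f => c_d; apply: connect_trans c_d _.
by apply: connect_trans x_f; rewrite symB.
Qed.

Lemma max_irr_simplex_separator A c d :
  max_irr_simplex m A -> c \in A -> d \notin A :|: perp m A ->
  {in A :\ c, forall k, gadj m k d} -> separator m ((A :\ c) :|: perp m A) c d.
Proof.
move=> maxA cA dAp d_nb; have /andP[/andP[sA _] _] := maxA.
have cp : c \notin perp m A by rewrite inE; apply/negP=> /forall_inP/(_ c cA); rewrite m_refl.
have [dA dp] : d \notin A /\ d \notin perp m A by apply/andP; rewrite -negb_or -in_setU.
rewrite /separator !in_setU !in_setD1 eqxx (negbTE cp) (negbTE dA) (negbTE dp) andbF /=.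
apply/negP=> c_d; have cd : c != d by apply: contraNneq dA => <-.
have [x [cx xB x_d]] := connect_gadjD_first_step cd c_d.
(* Only c was removed from the cut, so x reaches d outside the whole of A :|: perp A. *)
rewrite setUA setD1K // in xB x_d.
have [||| w [wB _ w_nb]] := gadjD_clique_neighbour (K := enum A) xB x_d.
- by move=> k; rewrite mem_enum in_setU => ->.
- by move=> k1 k2; rewrite !mem_enum; apply: simplex_gadj.
- move=> k; rewrite mem_enum => kA; have [->|kc] := eqVneq k c; first by rewrite cx.
  by rewrite d_nb ?orbT // in_setD1 kc.
move: wB; rewrite in_setU negb_or => /andP[wA]; rewrite (max_irr_simplex_perp maxA wA) //.
move=> k kA; have /andP[_ kw] : gadj m k w by apply: w_nb; rewrite mem_enum.
by rewrite finm_sym.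
Qed.

Lemma min_separator_outside_perp B a b c f :
  min_separator m B c f -> a \in B -> b \in B -> m a b = 2 ->
  exists2 d, d \notin [set a; b; c] :|: perp m [set a; b; c] & simplex m [set a; b; d].
Proof.
move=> msep aB bB mab; have /andP[/and3P[cB _ _] _] := msep.
have ab := m_eq2_neq mab.
have gab : gadj m a b by rewrite /gadj ab /finm mab.
have [d [dB /andP[_ ad] /andP[_ bd] c_d]] := min_separator_common_neighbour msep aB bB gab.
exists d; last by apply: simplex3; rewrite // /finm mab.
have cd : c != d by apply: contraNneq c_d => ->.
have da : d != a by apply: contraNneq dB => ->.
have db : d != b by apply: contraNneq dB => ->.
have dp : d \notin perp m [set a; b; c].
  rewrite inE; apply/negP=> /forall_inP/(_ c); rewrite !inE eqxx orbT => /(_ isT) /eqP mdc.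
  by apply: (negP c_d); apply: connect1; rewrite /gadjD cB dB /gadj cd /finm m_sym mdc.
by rewrite in_setU negb_or dp !inE !negb_or da db eq_sym cd.
Qed.

Lemma common_neighbour_bad_separator (B2 : {set {set S}}) a b c d :
  bad_simplex m B2 [set a; b; c] && max_irr_simplex m [set a; b; c] -> m a b = 2 ->
  d \notin [set a; b; c] :|: perp m [set a; b; c] -> simplex m [set a; b; d] ->
  exists B, bad_separator m B2 B.
Proof.
move=> badA mab dn sd; have /andP[_ maxA] := badA; have /andP[/andP[sA irrA] _] := maxA.
have ab := m_eq2_neq mab.
have c_ab : c \notin [set a; b].
  apply: contraTN irrA => c_ab; suff -> : [set a; b; c] = [set a; b] by rewrite irreducible_set2.
  apply/setP=> x; move: c_ab; rewrite !inE => /orP[] /eqP->.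
    by case: (x == a); rewrite ?orbF.
  by case: (x == b); rewrite ?orbF ?orbT.
have AcE : [set a; b; c] :\ c = [set a; b].
  apply/setP=> x; rewrite in_setD1 [in RHS]in_set2; have [->|xc] := eqVneq x c.
    by move: c_ab; rewrite in_set2 => /negbTE.
  by rewrite !inE (negbTE xc) orbF.
have dA : d \notin [set a; b; c] by move: dn; rewrite in_setU negb_or => /andP[].
have nbd : {in [set a; b; c] :\ c, forall k, gadj m k d}.
  rewrite AcE => k /set2P[]->; apply: simplex_gadj sd _ _ _; rewrite ?inE ?eqxx ?orbT //;
  by apply: contraNneq dA => <-; rewrite !inE eqxx ?orbT.
have := max_irr_simplex_separator maxA _ dn nbd; rewrite AcE !inE eqxx orbT => /(_ isT) sep0.
have [B subB msB] := exists_min_separator sep0; have /andP[sepB _] := msB.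
have nb_cd k : k \in [set a; b] -> k \in B.
  move=> kab; apply: separator_common_neighbour sepB _ (nbd k _); last by rewrite AcE.
  apply: simplex_gadj sA _ _ _; rewrite ?inE ?eqxx ?orbT //; first by move: kab; rewrite !inE => ->.
  by apply: contraNneq c_ab => ->.
have /and3P[cB dB _] := sepB.
have aB : a \in B by rewrite nb_cd ?set21.
have bB : b \in B by rewrite nb_cd ?set22.
by exists B, a, b, c, d.
Qed.
End CoxeterSeparators.

Theorem lemma4p4 (S : finType) (m : S -> S -> nat) (B2 : {set {set S}}) :
  coxeter_matrix m -> chordal m -> bad_edges m B2 ->
  ((exists B : {set S}, bad_separator m B2 B) <->
   (exists a b c d : S,
      [/\ bad_simplex m B2 [set a; b; c] && max_irr_simplex m [set a; b; c],
          m a b = 2,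
          d \notin [set a; b; c] :|: perp m [set a; b; c] &
          simplex m [set a; b; d]])).
Proof.
move=> m_coxeter m_chordal _; split.
- move=> [B [a [b [c [f [[aB bB mab _] [badA _ _ msep]]]]]]].
  have [d dn sd] := min_separator_outside_perp m_coxeter m_chordal msep aB bB mab.
  by exists a, b, c, d.
- move=> [a [b [c [d [badA mab dn sd]]]]].
  exact: common_neighbour_bad_separator badA mab dn sd.
Qed.
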